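(* Let $W$ be a finite real reflection group acting effectively on $\mathbf{R}^n$, with root system consisting of unit vectors, and let $\mathcal{A}$ be its (central, essential) arrangement of reflecting hyperplanes with intersection lattice $L_{\mathcal{A}}$. Let $\tau_1,\dots,\tau_n$ be any linearly independent roots. Let $$\lambda=\min\{|\mathbf{r}\cdot\rho| : \mathbf{r}\text{ a unit ray},\ \rho\text{ a root},\ \mathbf{r}\cdot\rho\neq 0\},$$ $a=1+1/\lambda$, and $\mathbf{v}=\tau_1+a\tau_2+a^2\tau_3+\dots+a^{n-1}\tau_n$. Then $|\mathbf{r}\cdot\mathbf{v}|\ge\lambda$ for every unit length ray $\mathbf{r}$. In particular, the affine hyperplane $H_{\mathbf{v}}$ is generic with respect to $\mathcal{A}$.
   Context: The roots of $W$ are the unit vectors $\pm\rho$ normal to reflecting hyperplanes of $W$ (in particular they are images under $W$ of the inward unit normals of a fundamental chamber). $L_{\mathcal{A}}$ is the set of intersections of subfamilies of $\mathcal{A}$, ordered by reverse inclusion. A ray is a nonzero vector lying in a one-dimensional subspace belonging to $L_{\mathcal{A}}$; a unit ray is a ray of length $1$ (there are finitely many, so $\lambda$ is a well-defined positive real number). For a nonzero vector $\mathbf{v}$, $H_{\mathbf{v}}$ is the affine hyperplane through $\mathbf{v}$ and normal to $\mathbf{v}$, i.e. $\{\mathbf{x}:\mathbf{x}\cdot\mathbf{v}=\mathbf{v}\cdot\mathbf{v}\}$. $H_{\mathbf{v}}$ is generic with respect to $\mathcal{A}$ if $\dim(H_{\mathbf{v}}\cap X)=\dim(X)-1$ for all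 $X\in L_{\mathcal{A}}$. *)

From HB Require Import structures.
From mathcomp Require Import all_boot all_order all_algebra.
From mathcomp Require Import reals.
Set Implicit Arguments. Unset Strict Implicit. Unset Printing Implicit Defensive.
Import Order.TTheory GRing.Theory Num.Theory.
Local Open Scope ring_scope.

Section Defs.
Variables (R : realType) (n : nat).

Definition dot (x y : 'rV[R]_n) : R := \sum_(i < n) x 0 i * y 0 i.

(* Orthogonal reflection in the hyperplane normal to the unit vector rho,
   acting on row vectors: x *m refl rho = x - 2 (x.rho) rho. *)
Definition refl (rho : 'rV[R]_n) : 'M[R]_n := 1%:M - 2%:R *: (rho^T *m rho).

(* W : a finite group of n x n real matrices (given by the finite list of its
   elements) generated by reflections. *)
Definition finite_reflection_group (W : seq 'M[R]_n) : Prop :=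
  [/\ 1%:M \in W,
      (forall g h, g \in W -> h \in W -> g *m h \in W) &
      (forall g, g \in W -> exists s : seq 'rV[R]_n,
          (forall rho, rho \in s -> dot rho rho = 1 /\ refl rho \in W) /\
          g = foldr (@mulmx R n n n) 1%:M [seq refl rho | rho <- s])].

Definition is_root (W : seq 'M[R]_n) (rho : 'rV[R]_n) : Prop :=
  dot rho rho = 1 /\ refl rho \in W.

(* Element of L_A: intersection of the reflecting hyperplanes indexed by a
   subfamily P of roots (as a set of vectors). *)
Definition flat (P : 'rV[R]_n -> Prop) (x : 'rV[R]_n) : Prop :=
  forall rho, P rho -> dot x rho = 0.

Definition in_LA (W : seq 'M[R]_n) (X : 'rV[R]_n -> Prop) : Prop :=
  exists P : 'rV[R]_n -> Prop, (forall rho, P rho -> is_root W rho) /\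
    (forall x, X x <-> flat P x).

(* Dimension of an affine subset of R^n (empty set has dimension -1):
   A is the translate a0 + U of a linear subspace U (row space of a matrix)
   of rank d. *)
Definition has_affdim (A : 'rV[R]_n -> Prop) (d : int) : Prop :=
  ((forall x, ~ A x) /\ d = -1) \/
  (exists (a0 : 'rV[R]_n) (U : 'M[R]_n),
      d = (\rank U)%:Z /\ forall x, A x <-> (x - a0 <= U)%MS).

Definition essential (W : seq 'M[R]_n) : Prop :=
  forall x : 'rV[R]_n, (forall rho, is_root W rho -> dot x rho = 0) -> x = 0.

Definition is_ray (W : seq 'M[R]_n) (r : 'rV[R]_n) : Prop :=
  r != 0 /\ exists X, [/\ in_LA W X, has_affdim X 1 & X r].

Definition is_unit_ray W r : Prop := is_ray W r /\ dot r r = 1.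

Definition is_lambda (W : seq 'M[R]_n) (lam : R) : Prop :=
  (exists r rho, [/\ is_unit_ray W r, is_root W rho, dot r rho != 0 &
                    `|dot r rho| = lam]) /\
  (forall r rho, is_unit_ray W r -> is_root W rho -> dot r rho != 0 ->
     lam <= `|dot r rho|).

Definition Hv (v x : 'rV[R]_n) : Prop := dot x v = dot v v.

Definition generic (W : seq 'M[R]_n) (v : 'rV[R]_n) : Prop :=
  forall X, in_LA W X -> forall d : int, has_affdim X d ->
    has_affdim (fun x => Hv v x /\ X x) (d - 1).

End Defs.

From HB Require Import structures.
From mathcomp Require Import all_boot all_order all_algebra.
From mathcomp Require Import reals ring lra zify.
From Stdlib Require Import Classical.
Import Order.TTheory GRing.Theory Num.Theory.
Local Open Scope ring_scope.
Set Implicit Arguments. Unset Strict Implicit.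

(* Write [r.v = \sum_i a^i (r.tau_i)].  For a unit ray [r] the nonzero terms
   [r.tau_i] lie in [[lam, 1]] in absolute value, and not all of them vanish
   because the [tau_i] form a basis.  If [k] is the last index with
   [r.tau_k <> 0], then [|a^k (r.tau_k)| >= a^k lam] while the earlier terms
   add up to at most [\sum_(i < k) a^i = lam (a^k - 1)], whence [|r.v| >= lam].
   Genericity follows: every flat [X] of dimension [d >= 1] contains a unit
   ray [r], and [r.v <> 0] makes [H_v] cut [X] in an affine subspace of
   dimension [d - 1]; the flat [{0}] misses [H_v] since [v <> 0]. *)

Section Dot.
Variables (R : realType) (n : nat).
Implicit Types (x y z : 'rV[R]_n).

Lemma dotC x y : dot x y = dot y x.
Proof. by apply: eq_bigr => i _; rewrite mulrC. Qed.

Lemma dotDl x y z : dot (x + y) z = dot x z + dot y z.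
Proof. by rewrite /dot -big_split; apply: eq_bigr => i _; rewrite mxE mulrDl. Qed.

Lemma dotZl (c : R) x y : dot (c *: x) y = c * dot x y.
Proof. by rewrite /dot mulr_sumr; apply: eq_bigr => i _; rewrite mxE mulrA. Qed.

Lemma dotNl x y : dot (- x) y = - dot x y.
Proof. by rewrite -scaleN1r dotZl mulN1r. Qed.

Lemma dotBl x y z : dot (x - y) z = dot x z - dot y z.
Proof. by rewrite dotDl dotNl. Qed.

Lemma dot0l y : dot 0 y = 0.
Proof. by rewrite -(scale0r 0) dotZl mul0r. Qed.

Lemma dotDr x y z : dot x (y + z) = dot x y + dot x z.
Proof. by rewrite dotC dotDl !(dotC x). Qed.

Lemma dotZr (c : R) x y : dot x (c *: y) = c * dot x y.
Proof. by rewrite dotC dotZl dotC. Qed.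

Lemma dotNr x y : dot x (- y) = - dot x y.
Proof. by rewrite dotC dotNl dotC. Qed.

Lemma dot0r y : dot y 0 = 0.
Proof. by rewrite dotC dot0l. Qed.

Lemma dot_sumr m x (F : 'I_m -> 'rV[R]_n) :
  dot x (\sum_(i < m) F i) = \sum_(i < m) dot x (F i).
Proof.
rewrite /dot; under eq_bigr => j _ do rewrite summxE mulr_sumr.
exact: exchange_big.
Qed.

Lemma dotxx_ge0 x : 0 <= dot x x.
Proof. by apply: sumr_ge0 => i _; rewrite -expr2 sqr_ge0. Qed.

Lemma dotxx_eq0 x : (dot x x == 0) = (x == 0).
Proof.
apply/eqP/eqP => [|->]; last exact: dot0l.
move/psumr_eq0P => x0; apply/rowP => i; rewrite mxE.
by apply/eqP; rewrite -sqrf_eq0 expr2 x0 // => j _; rewrite -expr2 sqr_ge0.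
Qed.

Lemma dot_mulmx_tr x y : (x *m y^T) 0 0 = dot x y.
Proof. by rewrite mxE; apply: eq_bigr => i _; rewrite mxE. Qed.

Lemma norm_dot_le1 x y : dot x x = 1 -> dot y y = 1 -> `|dot x y| <= 1.
Proof.
move=> xx1 yy1; have := dotxx_ge0 (x - y); have := dotxx_ge0 (x + y).
rewrite !(dotDl, dotNl, dotDr, dotNr) (dotC y x) xx1 yy1 => sum_ge0 diff_ge0.
by rewrite ler_norml; apply/andP; split; lra.
Qed.

Lemma sub_kermx_dot x y : (x <= kermx y^T)%MS = (dot x y == 0).
Proof.
rewrite sub_kermx -dot_mulmx_tr; apply/eqP/eqP => [->|xy0]; first by rewrite mxE.
by apply/matrixP => i j; rewrite !ord1 xy0 mxE.
Qed.

Lemma row_free_dot_neq0 (tau : 'I_n -> 'rV[R]_n) x :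
  row_free (\matrix_(i < n) tau i) -> x != 0 -> exists i, dot x (tau i) != 0.
Proof.
rewrite row_free_unit -unitmx_tr => tau_unit /negP x_neq0.
apply: NNPP => x_orth; apply: x_neq0.
have xtau0 : x *m (\matrix_(i < n) tau i)^T = 0.
  apply/rowP => j; rewrite [RHS]mxE; transitivity (dot x (tau j)).
    by rewrite !mxE; apply: eq_bigr => k _; rewrite !mxE.
  by apply: NNPP => ?; apply: x_orth; exists j; apply/eqP.
by rewrite -(mulmxK tau_unit x) xtau0 mul0mx.
Qed.

End Dot.

Lemma mxrank_cap_kermx_dot (R : realType) n (U : 'M[R]_n) (u w : 'rV[R]_n) :
  (u <= U)%MS -> dot u w != 0 -> \rank (U :&: kermx w^T)%MS = (\rank U).-1.
Proof.
move=> uU uw0.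
have w_neq0 : w != 0 by apply: contraNneq uw0 => ->; rewrite dot0r eqxx.
have u_neq0 : u != 0 by apply: contraNneq uw0 => ->; rewrite dot0l.
have U_gt0 : (0 < \rank U)%N by have := mxrankS uU; rewrite rank_rV u_neq0.
have rank_ker : \rank (kermx w^T) = (n - 1)%N.
  by rewrite mxrank_ker mxrank_tr rank_rV w_neq0.
have ker_ltmx : (kermx w^T < U + kermx w^T)%MS.
  rewrite ltmxE addsmxSr /=; apply: contra uw0 => sumU.
  by rewrite -sub_kermx_dot (submx_trans (submx_trans uU (addsmxSl _ _)) sumU).
have := rank_ltmx ker_ltmx; have := rank_leq_col (U + kermx w^T)%MS.
have := mxrank_sum_cap U (kermx w^T); rewrite rank_ker; lia.
Qed.

Section GeometricWeights.
Variables (R : realType) (lam : R).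
Hypothesis lam_gt0 : 0 < lam.

Lemma sum_weights m :
  \sum_(i < m) (1 + lam^-1) ^+ i = lam * ((1 + lam^-1) ^+ m - 1).
Proof.
elim: m => [|m IH]; first by rewrite big_ord0 expr0 subrr mulr0.
rewrite big_ord_recr /= IH exprSr; move: (_ ^+ m) => t.
by field; rewrite gt_eqF.
Qed.

Lemma weight_ge0 i : 0 <= (1 + lam^-1) ^+ i.
Proof. by rewrite exprn_ge0 // addr_ge0 // invr_ge0 ltW. Qed.

Lemma norm_weighted_sum_le m (f : 'I_m -> R) : (forall i, `|f i| <= 1) ->
  `|\sum_(i < m) (1 + lam^-1) ^+ i * f i| <= lam * ((1 + lam^-1) ^+ m - 1).
Proof.
move=> f_le1; rewrite -sum_weights; apply: le_trans (ler_norm_sum _ _ _) _.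
apply: ler_sum => i _; rewrite normrM ger0_norm ?weight_ge0 //.
by rewrite ler_piMr ?weight_ge0.
Qed.

Lemma weighted_sum_ge m (f : 'I_m -> R) :
  (forall i, `|f i| <= 1) -> (forall i, f i != 0 -> lam <= `|f i|) ->
  (exists i, f i != 0) -> lam <= `|\sum_(i < m) (1 + lam^-1) ^+ i * f i|.
Proof.
elim: m f => [|m IH] f f_le1 f_ge [i fi_neq0]; first by case: i fi_neq0.
rewrite big_ord_recr /=; have [fm0|fm_neq0] := eqVneq (f ord_max) 0.
  rewrite fm0 mulr0 addr0; apply: IH => [j|j|]; [exact: f_le1|exact: f_ge|].
  move: fi_neq0; case: (unliftP ord_max i) => [j ->|->]; last by rewrite fm0 eqxx.
  have -> : lift ord_max j = widen_ord (leqnSn m) j by apply: val_inj; exact: lift_max.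
  by exists j.
have prefix_le := norm_weighted_sum_le (fun j => f_le1 (widen_ord (leqnSn m) j)).
have last_ge : (1 + lam^-1) ^+ m * lam <= `|(1 + lam^-1) ^+ m * f ord_max|.
  by rewrite normrM ger0_norm ?weight_ge0 // ler_wpM2l ?weight_ge0 ?f_ge.
rewrite addrC; apply: le_trans (lerB_normD _ _).
by move: prefix_le last_ge; move: (_ ^+ m) => t; lra.
Qed.

End GeometricWeights.

Section Flats.
Variables (R : realType) (n : nat) (W : seq 'M[R]_n).
Implicit Types (P : 'rV[R]_n -> Prop) (U : 'M[R]_n).

Definition roots_only P := forall rho, P rho -> is_root W rho.

Lemma exists_unit_scale (u : 'rV[R]_n) :
  u != 0 -> exists c : R, dot (c *: u) (c *: u) = 1.
Proof.
rewrite -dotxx_eq0 => uu_neq0.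
have uu_gt0 : 0 < dot u u by rewrite lt_def uu_neq0 dotxx_ge0.
exists (Num.sqrt (dot u u))^-1; rewrite dotZl dotZr -{3}(sqr_sqrtr (dotxx_ge0 u)).
by field; rewrite gt_eqF // sqrtr_gt0.
Qed.

Lemma unit_ray_of_rank1 P U :
  roots_only P -> (forall x, flat P x <-> (x <= U)%MS) ->
  \rank U = 1%N -> exists2 r, is_unit_ray W r & (r <= U)%MS.
Proof.
move=> P_roots flatPU rankU.
have /rowV0Pn [u uU u_neq0] : U != 0 by rewrite -mxrank_eq0 rankU.
have [c cu_unit] := exists_unit_scale u_neq0.
have cu_neq0 : c *: u != 0 by rewrite -dotxx_eq0 cu_unit oner_eq0.
exists (c *: u); last exact: scalemx_sub.
split=> //; split=> //; exists (flat P); split.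
- by exists P.
- by right; exists 0, U; split=> [|x]; rewrite ?rankU // subr0.
- by apply/flatPU; exact: scalemx_sub.
Qed.

Lemma flat_add_root P U (rho : 'rV[R]_n) :
  (forall x, flat P x <-> (x <= U)%MS) ->
  forall x, flat (fun s => P s \/ s = rho) x <-> (x <= U :&: kermx rho^T)%MS.
Proof.
move=> flatPU x; rewrite sub_capmx sub_kermx_dot; split.
  move=> x_flat; rewrite (introT eqP (x_flat _ (or_intror erefl))) andbT.
  by apply/flatPU => s Ps; apply: x_flat; left.
by case/andP => /flatPU x_flat /eqP x_rho s [/x_flat|->].
Qed.

Hypothesis hess : essential W.

Lemma exists_root_dot_neq0 (u : 'rV[R]_n) :
  u != 0 -> exists2 rho, is_root W rho & dot u rho != 0.
Proof.
move=> /negP u_neq0; apply: NNPP => no_root; apply: u_neq0.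
apply/eqP/hess => rho rho_root.
by apply: NNPP => u_rho; apply: no_root; exists rho => //; apply/eqP.
Qed.

(* Cut the flat by the hyperplane of a root not containing it until it is a line. *)
Lemma exists_unit_ray_in_flat P U :
  roots_only P -> (forall x, flat P x <-> (x <= U)%MS) ->
  \rank U != 0%N -> exists2 r, is_unit_ray W r & (r <= U)%MS.
Proof.
move=> P_roots flatPU; rewrite -lt0n => /prednK rankU.
move: (\rank U).-1 (esym rankU) P_roots flatPU => k {rankU}.
elim: k P U => [|k IH] P U rankU P_roots flatPU.
  exact: unit_ray_of_rank1 P_roots flatPU rankU.
have /rowV0Pn [u uU u_neq0] : U != 0 by rewrite -mxrank_eq0 rankU.
have [rho rho_root u_rho] := exists_root_dot_neq0 u_neq0.
have [||r r_ray rU] := IH _ _ _ _ (flat_add_root rho flatPU).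
- by rewrite (mxrank_cap_kermx_dot uU u_rho) rankU.
- by move=> s [/P_roots|->].
- by exists r => //; exact: submx_trans rU (capmxSl _ _).
Qed.

Lemma flat_sub_of_affine P U (a0 : 'rV[R]_n) :
  (forall x, flat P x <-> (x - a0 <= U)%MS) ->
  forall x, flat P x <-> (x <= U)%MS.
Proof.
move=> flatPU; have /flatPU : flat P 0 by move=> rho _; exact: dot0l.
rewrite sub0r eqmx_opp => a0U x; rewrite flatPU; split=> [xa0U|xU].
  by rewrite -(subrK a0 x) addmx_sub.
by rewrite addmx_sub // eqmx_opp.
Qed.

Lemma generic_of_unit_ray_dot_neq0 (v : 'rV[R]_n) : v != 0 ->
  (forall r, is_unit_ray W r -> dot r v != 0) -> generic W v.
Proof.
move=> v_neq0 ray_v X [P [P_roots XP]] d [[X_empty _]|[a0 [U [dU XU]]]].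
  by case: (X_empty 0); apply/XP => rho _; exact: dot0l.
have flatPU : forall x, flat P x <-> (x <= U)%MS.
  by apply: (@flat_sub_of_affine _ _ a0) => x; rewrite -XP.
have {}XU x : X x <-> (x <= U)%MS by rewrite XP.
have [rankU0|rankU_neq0] := eqVneq (\rank U) 0%N.
  left; split; last by rewrite dU rankU0.
  move=> x [Hvx]; rewrite XU; move/eqP: rankU0; rewrite mxrank_eq0 => /eqP->.
  rewrite submx0 => /eqP x0; move: Hvx; rewrite /Hv x0 dot0l => /esym/eqP.
  by rewrite dotxx_eq0 (negPf v_neq0).
have [r r_ray rU] := exists_unit_ray_in_flat P_roots flatPU rankU_neq0.
have r_v := ray_v r r_ray; pose x0 := (dot v v / dot r v) *: r.
have x0U : (x0 <= U)%MS by exact: scalemx_sub.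
right; exists x0, (U :&: kermx v^T)%MS; split.
  rewrite (mxrank_cap_kermx_dot rU r_v) dU; move: rankU_neq0.
  by case: (\rank U) => // k _; lia.
move=> x; rewrite sub_capmx sub_kermx_dot dotBl dotZl divfK // subr_eq0 /Hv XU; split.
  by case=> -> xU; rewrite eqxx andbT addmx_sub // eqmx_opp.
by case/andP => xx0U /eqP; split=> //; rewrite -(subrK x0 x) addmx_sub.
Qed.

End Flats.

Theorem proposition4p1 (R : realType) (n : nat) (W : seq 'M[R]_n)
  (hW : finite_reflection_group W) (hess : essential W)
  (tau : 'I_n -> 'rV[R]_n) (htau : forall i, is_root W (tau i))
  (hind : row_free (\matrix_(i < n) tau i))
  (lam : R) (hlam : is_lambda W lam) :
  let a := 1 + lam^-1 in
  let v := \sum_(i < n) a ^+ i *: tau i in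
  (forall r, is_unit_ray W r -> lam <= `|dot r v|) /\ generic W v.
Proof.
move=> a v; have [[r0 [rho0 [r0_ray _ r0_rho0 lam_eq]]] lam_min] := hlam.
have lam_gt0 : 0 < lam by rewrite -lam_eq normr_gt0.
have ray_bound r : is_unit_ray W r -> lam <= `|dot r v|.
  move=> r_ray; have [[r_neq0 _] rr1] := r_ray.
  rewrite /v /a dot_sumr; under eq_bigr do rewrite dotZr.
  apply: weighted_sum_ge => // [i|i|]; last exact: row_free_dot_neq0.
    exact: norm_dot_le1 rr1 (htau i).1.
  exact: lam_min.
have ray_dot_neq0 r : is_unit_ray W r -> dot r v != 0.
  by move/ray_bound; apply: contraTneq => ->; rewrite normr0 -ltNge.
split=> //; apply: generic_of_unit_ray_dot_neq0 => //.
by apply: contraTneq (ray_dot_neq0 _ r0_ray) => ->; rewrite dot0r eqxx.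
Qed.
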